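(* Let $(X,d)$ be a bounded ultrametric space. Then the metric $d(x,y)$ has the strong Erdős–Hajnal property: for every $\varepsilon>0$ there is $\delta>0$ such that for all finite $A,B\subseteq X$ there are $A_0\subseteq A$, $B_0\subseteq B$ with $|A_0|\geq\delta|A|$, $|B_0|\geq\delta|B|$ and $|d(a,b)-d(a',b')|\leq\varepsilon$ for all $a,a'\in A_0$, $b,b'\in B_0$. *)

From Stdlib Require Import Reals List.
Import ListNotations.
Open Scope R_scope.

Definition is_metric {X : Type} (d : X -> X -> R) : Prop :=
  (forall x y, 0 <= d x y) /\
  (forall x y, d x y = 0 <-> x = y) /\
  (forall x y, d x y = d y x) /\
  (forall x y z, d x z <= d x y + d y z).

Definition is_ultrametric {X : Type} (d : X -> X -> R) : Prop :=
  is_metric d /\ (forall x y z, d x z <= Rmax (d x y) (d y z)).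

Definition bounded_metric {X : Type} (d : X -> X -> R) : Prop :=
  exists M : R, forall x y, d x y <= M.

(* A finite subset of X is represented by a duplicate-free list;
   its cardinality is the length of the list. S0 is a subset of S if
   S0 is duplicate-free and every element of S0 lies in S. *)
Definition finsubset {X : Type} (S0 S : list X) : Prop :=
  NoDup S0 /\ incl S0 S.

Definition strong_EH {X : Type} (f : X -> X -> R) : Prop :=
  forall eps : R, eps > 0 ->
  exists delta : R, delta > 0 /\
    forall A B : list X, NoDup A -> NoDup B ->
    exists A0 B0 : list X,
      finsubset A0 A /\ finsubset B0 B /\
      INR (length A0) >= delta * INR (length A) /\
      INR (length B0) >= delta * INR (length B) /\
      forall a a' b b', In a A0 -> In a' A0 -> In b B0 -> In b' B0 ->
        Rabs (f a b - f a' b') <= eps.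

From Stdlib Require Import Reals List Bool Lra Lia.
Import ListNotations.
Open Scope R_scope.

(* For an ultrametric [d] and [t >= 0], the relation [d x y <= t] is an
   equivalence.  For any equivalence relation, two finite sets [A], [B] contain
   subsets of proportion 1/4 that are either completely related or completely
   unrelated: take one class if it holds a quarter of [A], and otherwise a union
   of classes holding between a quarter and three quarters of [A].  If [d] is
   bounded by [n eps], applying this at the thresholds [(n-1) eps, ..., eps, 0]
   shrinks [A] and [B] by at most [(1/4)^n] until all distances between the two
   subsets lie in one interval [[s, s + eps]]. *)

Section DenseSublists.

Context {X : Type}.

Definition dense_sublist (k : R) (S0 S : list X) : Prop :=
  finsubset S0 S /\ INR (length S0) >= k * INR (length S).

Definition homogeneous_pair (k : R) (Rel : X -> X -> Prop) (A B : list X) : Prop :=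
  exists A0 B0, dense_sublist k A0 A /\ dense_sublist k B0 B /\
    forall a b, In a A0 -> In b B0 -> Rel a b.

Lemma dense_sublist_refl k S : NoDup S -> k <= 1 -> dense_sublist k S S.
Proof.
  intros HS Hk; split; [split; [exact HS | apply incl_refl]|].
  pose proof (pos_INR (length S)); nra.
Qed.

Lemma dense_sublist_weaken k k' S0 S :
  k' <= k -> dense_sublist k S0 S -> dense_sublist k' S0 S.
Proof.
  intros Hk [HS0 Hlen]; split; [exact HS0|].
  pose proof (pos_INR (length S)); nra.
Qed.

Lemma dense_sublist_trans k k' S1 S0 S :
  0 <= k -> dense_sublist k S1 S0 -> dense_sublist k' S0 S ->
  dense_sublist (k * k') S1 S.
Proof.
  intros Hk [[HS1 Hincl1] Hlen1] [[_ Hincl0] Hlen0].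
  split; [split; [exact HS1 | eapply incl_tran; eauto]|].
  assert (k * INR (length S0) >= k * (k' * INR (length S))) by
    (apply Rmult_ge_compat_l; lra).
  lra.
Qed.

Lemma dense_sublist_filter k (p : X -> bool) S :
  NoDup S -> INR (length (filter p S)) >= k * INR (length S) ->
  dense_sublist k (filter p S) S.
Proof.
  intros HS Hlen; split; [|exact Hlen].
  split; [now apply NoDup_filter|].
  intros y Hy; now apply filter_In in Hy.
Qed.

Lemma filter_dense_or_codense k (p : X -> bool) S :
  INR (length (filter p S)) >= k * INR (length S) \/
  INR (length (filter (fun x => negb (p x)) S)) >= (1 - k) * INR (length S).
Proof.
  pose proof (filter_length p S) as Hsplit.
  apply (f_equal INR) in Hsplit; rewrite plus_INR in Hsplit.
  destruct (Rge_dec (INR (length (filter p S))) (k * INR (length S)));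
    [left | right]; lra.
Qed.

Lemma length_filter_orb (p q : X -> bool) S :
  (length (filter (fun x => orb (p x) (q x)) S) <=
   length (filter p S) + length (filter q S))%nat.
Proof.
  induction S as [|x S IH]; simpl; [lia|].
  destruct (p x), (q x); simpl; lia.
Qed.

Lemma homogeneous_pair_filter k (Rel : X -> X -> Prop) (p q : X -> bool) A B :
  NoDup A -> NoDup B ->
  INR (length (filter p A)) >= k * INR (length A) ->
  INR (length (filter q B)) >= k * INR (length B) ->
  (forall a b, p a = true -> q b = true -> Rel a b) ->
  homogeneous_pair k Rel A B.
Proof.
  intros HA HB HpA HqB Hrel.
  exists (filter p A), (filter q B).
  split; [now apply dense_sublist_filter|].
  split; [now apply dense_sublist_filter|].
  intros a b Ha Hb; apply filter_In in Ha, Hb; now apply Hrel.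
Qed.

Lemma homogeneous_pair_impl k (R1 R2 : X -> X -> Prop) A B :
  (forall a b, R1 a b -> R2 a b) ->
  homogeneous_pair k R1 A B -> homogeneous_pair k R2 A B.
Proof.
  intros H12 [A0 [B0 [HA0 [HB0 Hrel]]]].
  exists A0, B0; auto.
Qed.

Lemma threshold_crossing (h : list X -> R) c L :
  h [] < c -> c <= h L -> exists x L1, h L1 < c /\ c <= h (x :: L1).
Proof.
  induction L as [|x L IH]; intros H0 HL; [lra|].
  destruct (Rle_dec c (h L)) as [Hc|Hc]; [now apply IH|].
  exists x, L; split; lra.
Qed.

End DenseSublists.

Section EquivalenceRamsey.

Context {X : Type}.
Variable E : X -> X -> bool.
Hypothesis E_refl : forall x, E x x = true.
Hypothesis E_sym : forall x y, E x y = E y x.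
Hypothesis E_trans : forall x y z, E x y = true -> E y z = true -> E x z = true.

Let related a b := E a b = true.
Let unrelated a b := E a b = false.

Definition saturated (P : X -> bool) : Prop :=
  forall a b, P a = true -> P b = false -> E a b = false.

Lemma class_saturated x : saturated (E x).
Proof.
  intros a b Ha Hb.
  destruct (E a b) eqn:Hab; [|reflexivity].
  rewrite (E_trans x a b Ha Hab) in Hb; discriminate.
Qed.

Definition covered (L : list X) (y : X) : bool := existsb (fun z => E z y) L.

Lemma covered_saturated L : saturated (covered L).
Proof.
  intros a b Ha Hb.
  destruct (E a b) eqn:Hab; [|reflexivity].
  apply existsb_exists in Ha as [z [Hz Hza]].
  assert (Hcov : covered L b = true) by
    (apply existsb_exists; exists z; split; [exact Hz | exact (E_trans z a b Hza Hab)]).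
  congruence.
Qed.

Lemma saturated_unrelated_pair k P A B :
  saturated P -> NoDup A -> NoDup B -> k <= / 2 ->
  INR (length (filter P A)) >= k * INR (length A) ->
  INR (length (filter (fun x => negb (P x)) A)) >= k * INR (length A) ->
  homogeneous_pair k unrelated A B.
Proof.
  intros HP HA HB Hk HPA HnPA.
  pose proof (pos_INR (length B)).
  destruct (filter_dense_or_codense (/ 2) P B) as [HPB | HnPB].
  - apply (homogeneous_pair_filter k _ (fun x => negb (P x)) P); auto; [nra|].
    intros a b Ha Hb; unfold unrelated; rewrite E_sym.
    apply HP; [exact Hb | now apply negb_true_iff].
  - apply (homogeneous_pair_filter k _ P (fun x => negb (P x))); auto; [nra|].
    intros a b Ha Hb; apply HP; [exact Ha | now apply negb_true_iff].
Qed.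

Lemma class_homogeneous_pair x A B :
  NoDup A -> NoDup B ->
  INR (length (filter (E x) A)) >= / 4 * INR (length A) ->
  homogeneous_pair (/ 4) related A B \/ homogeneous_pair (/ 4) unrelated A B.
Proof.
  intros HA HB HxA.
  pose proof (pos_INR (length B)).
  destruct (filter_dense_or_codense (/ 4) (E x) B) as [HxB | HnxB].
  - left; apply (homogeneous_pair_filter _ _ (E x) (E x)); auto.
    intros a b Ha Hb; apply (E_trans a x b); [now rewrite E_sym | exact Hb].
  - right; apply (homogeneous_pair_filter _ _ (E x) (fun y => negb (E x y)));
      auto; [lra|].
    intros a b Ha Hb; apply (class_saturated x); [exact Ha | now apply negb_true_iff].
Qed.

Lemma equivalence_homogeneous_pair A B :
  NoDup A -> NoDup B ->
  homogeneous_pair (/ 4) related A B \/ homogeneous_pair (/ 4) unrelated A B.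
Proof.
  intros HA HB.
  destruct (Nat.eq_0_gt_0_cases (length A)) as [HAnil | HApos].
  { apply length_zero_iff_nil in HAnil; subst A.
    left; exists [], B; split; [|split].
    - apply dense_sublist_refl; [exact HA | lra].
    - apply dense_sublist_refl; [exact HB | lra].
    - intros a b []. }
  apply lt_0_INR in HApos.
  set (g L := INR (length (filter (covered L) A))).
  assert (Hg_nil : g [] = 0).
  { unfold g; replace (filter (covered []) A) with (@nil X); [reflexivity|].
    clear; induction A as [|y A IH]; [reflexivity | exact IH]. }
  assert (Hg_all : g A = INR (length A)).
  { unfold g; f_equal; f_equal.
    rewrite filter_ext_in with (g := fun _ => true); [apply filter_true|].
    intros y Hy; apply existsb_exists; exists y; split; [exact Hy | apply E_refl]. }
  destruct (threshold_crossing g (/ 4 * INR (length A)) A) as [x [L1 [Hlow Hhigh]]];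
    [lra | lra |].
  (* A quarter of [A] is first covered by the classes of [x :: L1]; either that
     union still leaves a quarter of [A] uncovered, or the class of [x] alone
     holds more than half of [A]. *)
  pose proof (length_filter_orb (E x) (covered L1) A) as Hunion.
  apply le_INR in Hunion; rewrite plus_INR in Hunion.
  destruct (Rle_dec (g (x :: L1)) (3 / 4 * INR (length A))) as [Hle | Hgt].
  - right; apply (saturated_unrelated_pair _ (covered (x :: L1))).
    + apply covered_saturated.
    + exact HA.
    + exact HB.
    + lra.
    + unfold g in Hhigh; lra.
    + pose proof (filter_length (covered (x :: L1)) A) as Hsplit.
      apply (f_equal INR) in Hsplit; rewrite plus_INR in Hsplit.
      unfold g in Hle; lra.
  - apply (class_homogeneous_pair x); auto.
    unfold g in *.
    change (covered (x :: L1)) with (fun y => orb (E x y) (covered L1 y)) in Hgt.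
    lra.
Qed.

End EquivalenceRamsey.

Section Ultrametric.

Context {X : Type}.
Variable d : X -> X -> R.
Hypothesis d_ultra : is_ultrametric d.

Definition closeb (t : R) (x y : X) : bool :=
  if Rle_dec (d x y) t then true else false.

Lemma closeb_true t x y : closeb t x y = true <-> d x y <= t.
Proof. unfold closeb; destruct (Rle_dec (d x y) t); split; congruence || lra. Qed.

Lemma closeb_false t x y : closeb t x y = false <-> t < d x y.
Proof. unfold closeb; destruct (Rle_dec (d x y) t); split; congruence || lra. Qed.

Lemma ultrametric_dichotomy t A B :
  0 <= t -> NoDup A -> NoDup B ->
  homogeneous_pair (/ 4) (fun a b => d a b <= t) A B \/
  homogeneous_pair (/ 4) (fun a b => t < d a b) A B.
Proof.
  destruct d_ultra as [[_ [d_zero [d_sym _]]] d_max].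
  intros Ht HA HB.
  assert (close_refl : forall x, closeb t x x = true).
  { intros x; apply closeb_true; rewrite (proj2 (d_zero x x) eq_refl); exact Ht. }
  assert (close_sym : forall x y, closeb t x y = closeb t y x).
  { intros x y; unfold closeb; now rewrite d_sym. }
  assert (close_trans : forall x y z,
             closeb t x y = true -> closeb t y z = true -> closeb t x z = true).
  { intros x y z Hxy%closeb_true Hyz%closeb_true; apply closeb_true.
    apply Rle_trans with (Rmax (d x y) (d y z)); [apply d_max | now apply Rmax_lub]. }
  destruct (equivalence_homogeneous_pair (closeb t) close_refl close_sym close_trans A B HA HB)
    as [Hclose | Hfar]; [left | right].
  - exact (homogeneous_pair_impl _ _ _ _ _ (fun a b => proj1 (closeb_true t a b)) Hclose).
  - exact (homogeneous_pair_impl _ _ _ _ _ (fun a b => proj1 (closeb_false t a b)) Hfar).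
Qed.

Lemma ultrametric_band eps n A B :
  0 < eps -> NoDup A -> NoDup B ->
  (forall a b, In a A -> In b B -> d a b <= INR n * eps) ->
  exists s, homogeneous_pair ((/ 4) ^ n) (fun a b => s <= d a b <= s + eps) A B.
Proof.
  destruct d_ultra as [[d_pos _] _].
  intros Heps; revert A B; induction n as [|n IH]; intros A B HA HB Hbound.
  - exists 0, A, B; split; [|split].
    + apply dense_sublist_refl; [exact HA | simpl; lra].
    + apply dense_sublist_refl; [exact HB | simpl; lra].
    + intros a b Ha Hb; specialize (Hbound a b Ha Hb); simpl in Hbound.
      split; [apply d_pos | lra].
  - rewrite S_INR in Hbound.
    assert (Hstep : (/ 4) ^ S n = (/ 4) ^ n * / 4) by (simpl; ring).
    assert (Hpow : (/ 4) ^ n <= 1).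
    { clear; induction n as [|n IH]; simpl; [lra|].
      pose proof (pow_le (/ 4) n); nra. }
    assert (Ht : 0 <= INR n * eps) by (pose proof (pos_INR n); nra).
    destruct (ultrametric_dichotomy (INR n * eps) A B Ht HA HB)
      as [[A0 [B0 [HA0 [HB0 Hclose]]]] | [A0 [B0 [HA0 [HB0 Hfar]]]]].
    + destruct (IH A0 B0) as [s [A1 [B1 [HA1 [HB1 Hband]]]]];
        [apply HA0 | apply HB0 | exact Hclose |].
      exists s, A1, B1; rewrite Hstep.
      split; [|split; [|exact Hband]].
      * apply dense_sublist_trans with A0; [apply pow_le; lra | exact HA1 | exact HA0].
      * apply dense_sublist_trans with B0; [apply pow_le; lra | exact HB1 | exact HB0].
    + exists (INR n * eps), A0, B0.
      split; [|split].
      * apply dense_sublist_weaken with (/ 4); [rewrite Hstep; nra | exact HA0].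
      * apply dense_sublist_weaken with (/ 4); [rewrite Hstep; nra | exact HB0].
      * intros a b Ha Hb.
        destruct HA0 as [[_ HA0] _], HB0 as [[_ HB0] _].
        specialize (Hfar a b Ha Hb); specialize (Hbound a b (HA0 a Ha) (HB0 b Hb)).
        lra.
Qed.

End Ultrametric.

Theorem mainTheorem13 (X : Type) (d : X -> X -> R) :
  is_ultrametric d -> bounded_metric d -> strong_EH d.
Proof.
  intros Hultra [M HM] eps Heps.
  destruct (INR_unbounded (M / eps)) as [n Hn].
  assert (HMn : M < INR n * eps).
  { replace M with (M / eps * eps) by (field; lra).
    apply Rmult_lt_compat_r; lra. }
  exists ((/ 4) ^ n); split; [apply pow_lt; lra|].
  intros A B HA HB.
  destruct (ultrametric_band d Hultra eps n A B) as
    [s [A0 [B0 [[HA0 LA0] [[HB0 LB0] Hband]]]]]; auto.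
  { intros a b _ _; specialize (HM a b); lra. }
  exists A0, B0; do 4 (split; [assumption|]).
  intros a a' b b' Ha Ha' Hb Hb'.
  pose proof (Hband a b Ha Hb); pose proof (Hband a' b' Ha' Hb').
  apply Rabs_le; lra.
Qed.
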